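(* Let $A$, $c$, $B$ be as in the context, let $b\in\mathbb NA$, let $u\in\mathbb N^n$ with $Au=b$, and let $\tau\subseteq\{1,\dots,n\}$ be arbitrary. The group relaxation $G^\tau(b)$, i.e. the program $$\min\{(-cB)\cdot z : B^{\bar\tau}z\le\pi_\tau(u),\ z\in\mathbb Z^{n-d}\},$$ has a finite optimal solution if and only if $\tau$ is a face of $\Delta_c$.
   Context: $A\in\mathbb Z^{d\times n}$ has rank $d$, columns $a_1,\dots,a_n$, $cone(A)$ is pointed, $\{x\in\mathbb R^n_{\ge0}:Ax=0\}=\{0\}$, $\mathbb ZA=\mathbb Z^d$, and $\mathbb NA=\{Au:u\in\mathbb N^n\}$. The regular subdivision $\Delta_c$ of $cone(A)$ with respect to $c\in\mathbb Z^n$ is the collection of index sets $\sigma\subseteq\{1,\dots,n\}$ such that there exists $y\in\mathbb R^d$ with $y\cdot a_j=c_j$ for $j\in\sigma$ and $y\cdot a_j<c_j$ for $j\notin\sigma$; $c$ is assumed generic, meaning $\Delta_c$ is a triangulation of $cone(A)$. $B\in\mathbb Z^{n\times(n-d)}$ is a matrix whose columns form a basis of the lattice $\{x\in\mathbb Z^n:Ax=0\}$. For $\tau\subseteq\{1,\dots,n\}$ with complement $\bar\tau$, $B^{\bar\tau}$ is the submatrix of $B$ obtained by deleting the rows indexed by $\tau$, and $\pi_\tau:\mathbb R^n\to\mathbb R^{|\bar\tau|}$ deletes the coordinates indexed by $\tau$. (For $\tau$ a face of $\Delta_c$ this program is equivalent to Gomory's group relaxation $\min\{\tilde c_{\bar\tau}\cdot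 x_{\bar\tau}: A_\tau x_\tau+A_{\bar\tau}x_{\bar\tau}=b,\ x_{\bar\tau}\ge0,\ x\in\mathbb Z^n\}$, where $\tilde c_{\bar\tau}$ is $c_{\bar\sigma}-c_\sigma A_\sigma^{-1}A_{\bar\sigma}$ extended by zeros for a maximal face $\sigma\supseteq\tau$; for arbitrary $\tau$ the group relaxation is defined by the displayed program.) *)

From HB Require Import structures.
From mathcomp Require Import all_boot all_order all_algebra.
From mathcomp Require Import reals.
Set Implicit Arguments. Unset Strict Implicit. Unset Printing Implicit Defensive.
Import Order.TTheory GRing.Theory Num.Theory.
Local Open Scope ring_scope.

Definition realmx (R : realType) (m k : nat) (M : 'M[int]_(m, k)) : 'M[R]_(m, k) :=
  map_mx (fun z : int => z%:~R) M.

Definition full_row_rank (R : realType) (d n : nat) (A : 'M[int]_(d, n)) : Prop :=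
  \rank (realmx R A) = d.

(* cone(A) = { A x : x in R^n_{>=0} } is pointed: contains no line *)
Definition cone_pointed (R : realType) (d n : nat) (A : 'M[int]_(d, n)) : Prop :=
  forall x y : 'cV[R]_n, (forall j, 0 <= x j 0) -> (forall j, 0 <= y j 0) ->
    realmx R A *m x = - (realmx R A *m y) -> realmx R A *m x = 0.

Definition ker_nonneg_trivial (R : realType) (d n : nat) (A : 'M[int]_(d, n)) : Prop :=
  forall x : 'cV[R]_n, (forall j, 0 <= x j 0) -> realmx R A *m x = 0 -> x = 0.

Definition lattice_spanning (d n : nat) (A : 'M[int]_(d, n)) : Prop :=
  forall v : 'cV[int]_d, exists x : 'cV[int]_n, A *m x = v.

Definition in_NA (d n : nat) (A : 'M[int]_(d, n)) (b : 'cV[int]_d) : Prop :=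
  exists u : 'cV[int]_n, (forall j, 0 <= u j 0) /\ A *m u = b.

Definition face_Delta (R : realType) (d n : nat) (A : 'M[int]_(d, n))
    (c : 'rV[int]_n) (sigma : {set 'I_n}) : Prop :=
  exists y : 'rV[R]_d, forall j : 'I_n,
    (j \in sigma -> (y *m col j (realmx R A)) 0 0 = (c 0 j)%:~R) /\
    (j \notin sigma -> (y *m col j (realmx R A)) 0 0 < (c 0 j)%:~R).

(* c generic: Delta_c is a triangulation, i.e. every face sigma of Delta_c
   is simplicial: the columns a_j, j in sigma, are linearly independent. *)
Definition generic_cost (R : realType) (d n : nat) (A : 'M[int]_(d, n))
    (c : 'rV[int]_n) : Prop :=
  forall sigma : {set 'I_n}, face_Delta R A c sigma ->
    forall lam : 'cV[R]_n, (forall j, j \notin sigma -> lam j 0 = 0) ->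
      realmx R A *m lam = 0 -> lam = 0.

Definition kernel_lattice_basis (d n k : nat) (A : 'M[int]_(d, n))
    (B : 'M[int]_(n, k)) : Prop :=
  [/\ A *m B = 0,
      (forall x : 'cV[int]_n, A *m x = 0 -> exists z : 'cV[int]_k, x = B *m z) &
      (forall z : 'cV[int]_k, B *m z = 0 -> z = 0)].

Definition grp_feasible (n k : nat) (B : 'M[int]_(n, k)) (u : 'cV[int]_n)
    (tau : {set 'I_n}) (z : 'cV[int]_k) : Prop :=
  forall j : 'I_n, j \notin tau -> (B *m z) j 0 <= u j 0.

Definition grp_obj (n k : nat) (c : 'rV[int]_n) (B : 'M[int]_(n, k))
    (z : 'cV[int]_k) : int :=
  ((- (c *m B)) *m z) 0 0.

Definition grp_has_finite_opt (n k : nat) (c : 'rV[int]_n) (B : 'M[int]_(n, k))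
    (u : 'cV[int]_n) (tau : {set 'I_n}) : Prop :=
  exists z : 'cV[int]_k, grp_feasible B u tau z /\
    forall z' : 'cV[int]_k, grp_feasible B u tau z' -> grp_obj c B z <= grp_obj c B z'.

(* If tau is a face of Delta_c, a point y with yA <= c that is tight on tau
   gives, by weak duality, the lower bound yAu - cu for the integer objective
   on the feasible lattice points, so the minimum is attained.  Conversely, at
   an optimum no integer (hence no rational) direction r with B^{bar tau} r <= 0
   improves the objective, so by Farkas' lemma cB = mu B for some mu >= 0
   vanishing on tau.  Then c - mu is orthogonal to ker_Z A = B Z^(n-d), hence
   lies in the rational row space of A: c - mu = yA, with y tight on tau.
   Finally, since the columns of a cell of Delta_c are independent, y can be
   perturbed to be tight exactly on tau. *)

From HB Require Import structures.
From mathcomp Require Import all_boot all_order all_algebra.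
From mathcomp Require Import reals.
From mathcomp Require Import ring lra.
From Stdlib Require Import Classical.
Set Implicit Arguments. Unset Strict Implicit. Unset Printing Implicit Defensive.
Import Order.TTheory GRing.Theory Num.Theory.
Local Open Scope ring_scope.

Section FourierMotzkin.
Variable F : realFieldType.

Lemma sum_comb_exchange (I J : finType) (lam : J -> F) (co : J -> I -> F) (f : I -> F) :
  \sum_i (\sum_j lam j * co j i) * f i = \sum_j lam j * \sum_i co j i * f i.
Proof.
under eq_bigr do rewrite mulr_suml.
rewrite exchange_big /=; apply: eq_bigr => j _.
by rewrite mulr_sumr; apply: eq_bigr => i _; rewrite mulrA.
Qed.

Lemma sum_indicator (I : finType) (i0 : I) (f : I -> F) :
  \sum_i (i == i0)%:R * f i = f i0.
Proof.
rewrite (bigD1 i0) //= eqxx mul1r big1 ?addr0 // => i /negbTE ->.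
by rewrite mul0r.
Qed.

Section EliminateOneVariable.
Variables (I : finType) (a : I -> F).

(* The rows of the eliminated system: the rows with [a i = 0], and for every
   pair [a p > 0 > a q] the combination [- a q * row p + a p * row q]. *)
Definition fm_comb (j : I + I * I) (i : I) : F :=
  match j with
  | inl i0 => ((i == i0) && (a i0 == 0))%:R
  | inr (p, q) => if (0 < a p) && (a q < 0)
      then (i == p)%:R * - a q + (i == q)%:R * a p else 0
  end.

Lemma fm_comb_ge0 j i : 0 <= fm_comb j i.
Proof.
case: j => [i0 | [p q]] /=; first by case: (_ && _).
case: ifP => // /andP [ap_gt0 aq_lt0].
by rewrite addr_ge0 // mulr_ge0 ?ler0n // ?oppr_ge0 ltW.
Qed.

Definition fm_elim (f : I -> F) j := \sum_i fm_comb j i * f i.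

Lemma fm_elim_zero i0 (f : I -> F) : a i0 = 0 -> fm_elim f (inl i0) = f i0.
Proof.
move=> ai0; rewrite /fm_elim -[RHS]sum_indicator; apply: eq_bigr => i _.
by rewrite /= ai0 eqxx andbT.
Qed.

Lemma fm_elim_pair p q (f : I -> F) : 0 < a p -> a q < 0 ->
  fm_elim f (inr (p, q)) = - a q * f p + a p * f q.
Proof.
move=> ap_gt0 aq_lt0; rewrite /fm_elim /= ap_gt0 aq_lt0 /=.
under eq_bigr do rewrite mulrDl -!mulrA.
by rewrite big_split /= !sum_indicator.
Qed.

Lemma fm_elim_self j : fm_elim a j = 0.
Proof.
case: j => [i0 | [p q]].
  have [ai0 | ai0_neq0] := eqVneq (a i0) 0; first by rewrite fm_elim_zero.
  by rewrite /fm_elim big1 // => i _; rewrite /= (negbTE ai0_neq0) andbF mul0r.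
have [/andP [ap_gt0 aq_lt0] | pq_not_mixed] := boolP ((0 < a p) && (a q < 0)).
  by rewrite fm_elim_pair // mulNr [a q * _]mulrC addNr.
by rewrite /fm_elim big1 // => i _; rewrite /= (negbTE pq_not_mixed) mul0r.
Qed.

Lemma fm_one_var_feasible (e : I -> F) :
  (forall j, 0 <= fm_elim e j) -> exists x, forall i, a i * x <= e i.
Proof.
move=> comb_ge0.
have lo_le_up p q : 0 < a p -> a q < 0 -> e q / a q <= e p / a p.
  move=> ap_gt0 aq_lt0; have := comb_ge0 (inr (p, q)); rewrite fm_elim_pair //.
  set Y := e p / a p; set X := e q / a q.
  rewrite -(divfK (lt0r_neq0 ap_gt0) (e p)) -(divfK (ltr0_neq0 aq_lt0) (e q)) -/X -/Y.
  have P_gt0 : 0 < a p * - a q by rewrite mulr_gt0 ?oppr_gt0.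
  move=> comb_pq_ge0; rewrite -subr_ge0 -(pmulr_rge0 _ P_gt0).
  by have -> : a p * - a q * (Y - X) = - a q * (Y * a p) + a p * (X * a q) by ring.
(* The largest lower bound, seeded with a value below every upper bound. *)
pose up := \big[Num.min/0]_(p | 0 < a p) (e p / a p).
exists (\big[Num.max/up]_(q | a q < 0) (e q / a q)) => i.
case: (ltgtP (a i) 0) => [ai_lt0 | ai_gt0 | ai0].
- by rewrite mulrC -ler_ndivrMr //; apply: le_bigmax_cond.
- rewrite mulrC -ler_pdivlMr //; apply: bigmax_le => [|q]; last exact: lo_le_up.
  exact: bigmin_le_cond.
- by have := comb_ge0 (inl i); rewrite fm_elim_zero // ai0 mul0r.
Qed.

End EliminateOneVariable.

Lemma fm_lift k (I : finType) (a : I -> 'I_k.+1 -> F) (b : I -> F) (r : 'I_k -> F) :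
  (forall j, \sum_l fm_elim (a^~ ord0) (a^~ (lift ord0 l)) j * r l
               <= fm_elim (a^~ ord0) b j) ->
  exists r1 : 'I_k.+1 -> F, forall i, \sum_l a i l * r1 l <= b i.
Proof.
move=> reduced_sol.
pose s i := \sum_l a i (lift ord0 l) * r l.
have [x x_sol] : exists x, forall i, a i ord0 * x <= b i - s i.
  apply: fm_one_var_feasible => j.
  rewrite /fm_elim; under eq_bigr do rewrite mulrBr.
  by rewrite sumrB subr_ge0 -sum_comb_exchange; apply: reduced_sol.
exists (fun l => if unlift ord0 l is Some l' then r l' else x) => i.
rewrite big_ord_recl /= unlift_none; under eq_bigr do rewrite liftK.
by rewrite -lerBrDr; apply: x_sol.
Qed.

Theorem fourier_motzkin k (I : finType) (a : I -> 'I_k -> F) (b : I -> F) :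
  (forall r : 'I_k -> F, ~ (forall i, \sum_l a i l * r l <= b i)) ->
  exists lam : I -> F, [/\ forall i, 0 <= lam i,
    forall l, \sum_i lam i * a i l = 0 & \sum_i lam i * b i < 0].
Proof.
elim: k I a b => [|k IH] I a b infeasible.
  have [i bi_lt0 | b_ge0] := pickP (fun i => b i < 0).
    exists (fun j => (j == i)%:R); split=> [j | [] // | ]; first by rewrite ler0n.
    by rewrite sum_indicator.
  exfalso; apply: (infeasible (fun _ => 0)) => i.
  by rewrite big_ord0 leNgt b_ge0.
have [|lam [lam_ge0 lam_elim lam_neg]] :=
  IH _ (fun j l => fm_elim (a^~ ord0) (a^~ (lift ord0 l)) j) (fm_elim (a^~ ord0) b).
  by move=> r /fm_lift [r1]; apply: infeasible.
exists (fun i => \sum_j lam j * fm_comb (a^~ ord0) j i); split.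
- by move=> i; apply: sumr_ge0 => j _; rewrite mulr_ge0 ?fm_comb_ge0.
- move=> l; rewrite sum_comb_exchange; case: (unliftP ord0 l) => [l'|] ->.
    exact: lam_elim.
  by rewrite big1 // => j _; rewrite -[X in _ * X]/(fm_elim _ _ j) fm_elim_self mulr0.
- by rewrite sum_comb_exchange.
Qed.

Corollary farkas k (I : finType) (a : I -> 'I_k -> F) (g : 'I_k -> F) :
  (forall r, (forall i, \sum_l a i l * r l <= 0) -> \sum_l g l * r l <= 0) ->
  exists lam : I -> F, (forall i, 0 <= lam i) /\ forall l, \sum_i lam i * a i l = g l.
Proof.
move=> cone_ineq.
(* Append the row [- g . r <= -1]; its multiplier in the certificate is positive. *)
pose a2 (j : I + 'I_1) l := if j is inl i then a i l else - g l.
pose b2 (j : I + 'I_1) : F := if j is inl _ then 0 else -1.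
have [r r_sol | lam [lam_ge0 lam_elim lam_neg]] := @fourier_motzkin k _ a2 b2.
  have := cone_ineq r (fun i => r_sol (inl i)).
  have := r_sol (inr ord0); rewrite /a2 /b2.
  under eq_bigr do rewrite mulNr.
  rewrite sumrN lerNl opprK => ge1 le0.
  by have := le_trans ge1 le0; rewrite ler10.
move: lam_neg; rewrite big_sumType big_ord1 /= big1 ?add0r => [|i _]; last first.
  by rewrite mulr0.
rewrite mulrN1 oppr_lt0 => lam_g_gt0.
exists (fun i => lam (inl i) / lam (inr ord0)); split.
  by move=> i; rewrite divr_ge0 // ltW.
move=> l; move: (lam_elim l); rewrite big_sumType big_ord1 /= => E.
under eq_bigr do rewrite mulrAC.
rewrite -mulr_suml; apply: (@mulIf _ (lam (inr ord0))); first by rewrite lt0r_neq0.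
rewrite mulfVK ?lt0r_neq0 //; apply/eqP; rewrite -subr_eq0; apply/eqP.
by rewrite -[RHS]E mulrN mulrC.
Qed.

End FourierMotzkin.

Lemma mulmx_colE (R : pzSemiRingType) m p q (X : 'M[R]_(m, p)) (Y : 'M[R]_(p, q)) i j :
  (X *m col j Y) i 0 = (X *m Y) i j.
Proof. by rewrite colE mulmxA -colE mxE. Qed.

Lemma mulmx_col_funE (R : pzSemiRingType) m p (X : 'M[R]_(m, p)) (r : 'I_p -> R) i :
  (X *m \col_l r l) i 0 = \sum_l X i l * r l.
Proof. by rewrite mxE; apply: eq_bigr => l _; rewrite mxE. Qed.

Lemma realmxM (R : realType) m p q (M : 'M[int]_(m, p)) (N : 'M[int]_(p, q)) :
  realmx R (M *m N) = realmx R M *m realmx R N.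
Proof. exact: map_mxM. Qed.

Definition ratmx m p (M : 'M[int]_(m, p)) : 'M[rat]_(m, p) :=
  map_mx (fun z : int => z%:~R) M.

Lemma ratmxE m p (M : 'M[int]_(m, p)) i j : ratmx M i j = (M i j)%:~R.
Proof. exact: mxE. Qed.

Lemma ratmxM m p q (M : 'M[int]_(m, p)) (N : 'M[int]_(p, q)) :
  ratmx (M *m N) = ratmx M *m ratmx N.
Proof. exact: map_mxM. Qed.

Lemma ratmx_inj m p : injective (@ratmx m p).
Proof.
move=> M N /matrixP MN; apply/matrixP => i j.
by apply: (@intr_inj rat); rewrite -!ratmxE MN.
Qed.

Lemma ratr_ratmx (R : realType) m p (M : 'M[int]_(m, p)) :
  map_mx ratr (ratmx M) = realmx R M.
Proof. by apply/matrixP => i j; rewrite !mxE ratr_int. Qed.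

Lemma clear_denominators m p (M : 'M[rat]_(m, p)) :
  exists2 N : int, 0 < N & exists X : 'M[int]_(m, p), ratmx X = N%:~R *: M.
Proof.
pose den ij := denq (M ij.1 ij.2).
exists (\prod_ij den ij); first by apply: prodr_gt0 => ij _; apply: denq_gt0.
exists (\matrix_(i, j) (numq (M i j) * \prod_(ij | ij != (i, j)) den ij)).
by apply/matrixP => i j; rewrite !mxE [in RHS](bigD1 (i, j)) //= !intrM numqE; ring.
Qed.

Lemma row_solvable_on_independent_cols (F : fieldType) d n (M : 'M[F]_(d, n))
    (sigma : {set 'I_n}) :
  (forall lam : 'cV_n,
     (forall j, j \notin sigma -> lam j 0 = 0) -> M *m lam = 0 -> lam = 0) ->
  forall t : 'rV_n, exists w : 'rV_d, forall j, j \in sigma -> (w *m M) 0 j = t 0 j.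
Proof.
move=> indep t; pose D := diag_mx (\row_j (j \in sigma)%:R : 'rV[F]_n).
have DK0 : D *m cokermx (M *m D) = 0.
  have col0 j : D *m col j (cokermx (M *m D)) = 0.
    apply: indep => [l l_out | ]; first by rewrite mul_diag_mx !mxE (negbTE l_out) mul0r.
    by rewrite mulmxA colE mulmxA mulmx_coker mul0mx.
  by apply/matrixP => i j; rewrite -mulmx_colE col0 !mxE.
have /submxP [w tD] : (t *m D <= M *m D)%MS by rewrite submxE -mulmxA DK0 mulmx0.
exists w => j j_sigma; move/rowP/(_ j): tD.
by rewrite mulmxA !mul_mx_diag !mxE j_sigma !mulr1 => ->.
Qed.

Lemma bounded_below_int_min (T : Type) (P : T -> Prop) (f : T -> int) (L : int) t0 :
  P t0 -> (forall t, P t -> L <= f t) ->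
  exists t, P t /\ forall t', P t' -> f t <= f t'.
Proof.
move=> Pt0 f_ge_L; apply: NNPP => no_min.
suff no_height m t : P t -> f t - L = m%:Z -> False.
  by apply: (no_height `|f t0 - L|%N t0 Pt0); rewrite gez0_abs // subr_ge0 f_ge_L.
elim/ltn_ind: m t => m IH t Pt ft; apply: no_min; exists t; split=> // t' Pt'.
rewrite leNgt; apply/negP => ft'_lt.
apply: (IH `|f t' - L|%N _ t' Pt'); last by rewrite gez0_abs // subr_ge0 f_ge_L.
by rewrite -ltz_nat gez0_abs ?subr_ge0 ?f_ge_L // -ft ltrD2r.
Qed.

Definition dual_tight_on (R : realType) d n (A : 'M[int]_(d, n)) (c : 'rV[int]_n)
    (tau : {set 'I_n}) (y : 'rV[R]_d) : Prop :=
  (forall j, (y *m realmx R A) 0 j <= (c 0 j)%:~R) /\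
  (forall j, j \in tau -> (y *m realmx R A) 0 j = (c 0 j)%:~R).

Lemma face_Delta_dual_tight (R : realType) d n (A : 'M[int]_(d, n)) (c : 'rV[int]_n) tau :
  face_Delta R A c tau -> exists y : 'rV[R]_d, dual_tight_on A c tau y.
Proof.
case=> y face_y; exists y; split=> j; have [tight slack] := face_y j;
  rewrite !mulmx_colE in tight slack; last exact: tight.
by case: (boolP (j \in tau)) => [/tight -> | /slack /ltW].
Qed.

Lemma dual_tight_face_Delta (R : realType) d n (A : 'M[int]_(d, n)) (c : 'rV[int]_n)
    tau (y : 'rV[R]_d) :
  generic_cost R A c -> dual_tight_on A c tau y -> face_Delta R A c tau.
Proof.
move=> generic [y_le y_tight].
pose yA := y *m realmx R A; pose sigma := [set j | yA 0 j == (c 0 j)%:~R].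
have sigma_face : face_Delta R A c sigma.
  exists y => j; rewrite !mulmx_colE inE; split; first by move/eqP.
  by rewrite lt_neqAle y_le andbT.
have [w w_sigma] := row_solvable_on_independent_cols (generic _ sigma_face)
                      (\row_j (j \notin tau)%:R).
pose wA := w *m realmx R A.
(* [e * (1 + |wA_j|) <= c_j - yA_j] keeps the columns outside sigma slack. *)
pose slack j := ((c 0 j)%:~R - yA 0 j) / (1 + `|wA 0 j|).
pose e := \big[Num.min/1]_(j | j \notin sigma) slack j.
have e_gt0 : 0 < e.
  apply: lt_bigmin => // j; rewrite inE => j_out.
  apply: divr_gt0; last by rewrite ltr_pwDl.
  by rewrite subr_gt0 lt_neqAle j_out y_le.
exists (y - e *: w) => j.
have -> : ((y - e *: w) *m col j (realmx R A)) 0 0 = yA 0 j - e * wA 0 j.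
  by rewrite mulmx_colE mulmxBl -scalemxAl !mxE.
split=> [j_tau | j_out].
  have j_sigma : j \in sigma by rewrite inE y_tight.
  by rewrite w_sigma // [X in e * X]mxE j_tau mulr0 subr0 y_tight.
have [j_sigma | j_nsigma] := boolP (j \in sigma).
  rewrite w_sigma // [X in e * X]mxE j_out mulr1; move: j_sigma; rewrite inE => /eqP ->.
  by rewrite ltrBlDr ltrDl.
have : e <= slack j by apply: bigmin_le_cond.
rewrite ler_pdivlMr ?ltr_pwDl // => e_le.
have : - wA 0 j <= `|wA 0 j| by rewrite -normrN ler_norm.
nra.
Qed.

Lemma dual_tight_obj_lower_bound (R : realType) d n k (A : 'M[int]_(d, n))
    (c : 'rV[int]_n) (B : 'M[int]_(n, k)) (u : 'cV[int]_n) tau (y : 'rV[R]_d) z :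
  A *m B = 0 -> dual_tight_on A c tau y -> grp_feasible B u tau z ->
  (y *m realmx R (A *m u)) 0 0 - ((c *m u) 0 0)%:~R <= (grp_obj c B z)%:~R.
Proof.
move=> AB0 [y_le y_tight] z_feas.
set Bz := B *m z in z_feas; pose x := u - Bz.
have -> : grp_obj c B z = (c *m x) 0 0 - (c *m u) 0 0.
  by rewrite /grp_obj /x mulmxBr mulNmx mulmxA !mxE addrAC subrr add0r.
have -> : A *m u = A *m x by rewrite /x mulmxBr mulmxA AB0 mul0mx subr0.
rewrite intrB lerD2r.
have -> : ((c *m x) 0 0)%:~R = realmx R (c *m x) 0 0 :> R by rewrite [RHS]mxE.
rewrite !realmxM mulmxA.
set yA := y *m realmx R A; rewrite !mxE; apply: ler_sum => j _.
rewrite [realmx R c _ _]mxE; have [j_tau | j_out] := boolP (j \in tau).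
  by rewrite y_tight.
rewrite ler_wpM2r ?y_le // mxE ler0z /x.
by have := z_feas j j_out; rewrite !mxE subr_ge0.
Qed.

Lemma dual_tight_finite_opt (R : realType) d n k (A : 'M[int]_(d, n))
    (c : 'rV[int]_n) (B : 'M[int]_(n, k)) (u : 'cV[int]_n) tau (y : 'rV[R]_d) :
  A *m B = 0 -> (forall j, 0 <= u j 0) -> dual_tight_on A c tau y ->
  grp_has_finite_opt c B u tau.
Proof.
move=> AB0 u_ge0 y_tight.
set rho := (y *m realmx R (A *m u)) 0 0 - ((c *m u) 0 0)%:~R.
apply: (@bounded_below_int_min _ (grp_feasible B u tau) (grp_obj c B) (Num.floor rho) 0).
  by move=> j _; rewrite mulmx0 mxE u_ge0.
move=> z z_feas; rewrite -(ler_int R).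
exact: le_trans (floor_le rho) (dual_tight_obj_lower_bound AB0 y_tight z_feas).
Qed.

Lemma finite_opt_recession n k (c : 'rV[int]_n) (B : 'M[int]_(n, k)) u tau z :
  grp_has_finite_opt c B u tau ->
  (forall j, j \notin tau -> (B *m z) j 0 <= 0) -> 0 <= grp_obj c B z.
Proof.
case=> z0 [z0_feas z0_min] z_rec.
have feas : grp_feasible B u tau (z0 + z).
  by move=> j j_out; rewrite mulmxDr mxE -[u j 0]addr0 lerD ?z0_feas ?z_rec.
by have := z0_min _ feas; rewrite /grp_obj mulmxDr [(_ + _ : 'M_(1, 1)) _ _]mxE lerDl.
Qed.

Lemma finite_opt_recession_rat n k (c : 'rV[int]_n) (B : 'M[int]_(n, k)) u tau
    (r : 'cV[rat]_k) :
  grp_has_finite_opt c B u tau ->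
  (forall j, j \notin tau -> (ratmx B *m r) j 0 <= 0) ->
  (ratmx c *m ratmx B *m r) 0 0 <= 0.
Proof.
move=> opt r_rec; have [N N_gt0 [zr zr_def]] := clear_denominators r.
have scaled M : ratmx (M *m zr) = N%:~R *: (ratmx M *m r).
  by rewrite ratmxM zr_def scalemxAr.
have := finite_opt_recession (z := zr) opt.
have ratmx_obj : ratmx (- (c *m B)) = - (ratmx c *m ratmx B).
  by rewrite -ratmxM [LHS]map_mxN.
rewrite -(ler_int rat) -ratmxE scaled ratmx_obj mulNmx mxE mxE.
rewrite pmulr_rge0 ?ltr0z // oppr_ge0; apply=> j j_out.
by rewrite -(ler_int rat) -ratmxE scaled mxE pmulr_rle0 ?ltr0z ?r_rec.
Qed.

Lemma finite_opt_dual_multiplier n k (c : 'rV[int]_n) (B : 'M[int]_(n, k)) u tau :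
  grp_has_finite_opt c B u tau ->
  exists2 mu : 'rV[rat]_n, (forall j, 0 <= mu 0 j /\ (j \in tau -> mu 0 j = 0))
                         & mu *m ratmx B = ratmx c *m ratmx B.
Proof.
move=> opt; pose a i l : rat := if i \in tau then 0 else ratmx B i l.
have [|lam [lam_ge0 lam_comb]] := @farkas _ k _ a (fun l => (ratmx c *m ratmx B) 0 l).
  move=> r r_rec; have := finite_opt_recession_rat (r := \col_l r l) opt.
  rewrite mulmx_col_funE; apply=> j j_out.
  by have := r_rec j; rewrite /a (negbTE j_out) mulmx_col_funE.
exists (\row_i (if i \in tau then 0 else lam i)).
  by move=> j; rewrite mxE; case: (j \in tau).
apply/rowP => l; rewrite -lam_comb mxE; apply: eq_bigr => i _.
by rewrite mxE /a; case: (i \in tau); rewrite ?mul0r ?mulr0.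
Qed.

Lemma kernel_orthogonal_rowspace d n k (A : 'M[int]_(d, n)) (B : 'M[int]_(n, k))
    (v : 'rV[rat]_n) :
  (forall x : 'cV[int]_n, A *m x = 0 -> exists z : 'cV[int]_k, x = B *m z) ->
  v *m ratmx B = 0 -> (v <= ratmx A)%MS.
Proof.
move=> ker_span vB0; rewrite submxE; apply/eqP.
have [N N_gt0 [X X_def]] := clear_denominators (cokermx (ratmx A)).
have AX0 : A *m X = 0.
  by apply: ratmx_inj; rewrite ratmxM X_def -scalemxAr mulmx_coker scaler0 [RHS]map_mx0.
have vX0 : v *m ratmx X = 0.
  apply/rowP => j; rewrite -mulmx_colE -map_col -/(ratmx _).
  have [z ->] : exists z, col j X = B *m z.
    by apply: ker_span; rewrite colE mulmxA AX0 mul0mx.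
  by rewrite ratmxM mulmxA vB0 mul0mx !mxE.
have : N%:~R *: (v *m cokermx (ratmx A)) = 0 by rewrite scalemxAr -X_def.
by move/eqP; rewrite scaler_eq0 intr_eq0 gt_eqF //= => /eqP.
Qed.

Lemma finite_opt_dual_tight (R : realType) d n k (A : 'M[int]_(d, n))
    (c : 'rV[int]_n) (B : 'M[int]_(n, k)) (u : 'cV[int]_n) tau :
  kernel_lattice_basis A B -> grp_has_finite_opt c B u tau ->
  exists y : 'rV[R]_d, dual_tight_on A c tau y.
Proof.
case=> _ ker_span _ /finite_opt_dual_multiplier [mu mu_props muB].
have /submxP [D D_def] : (ratmx c - mu <= ratmx A)%MS.
  by apply: kernel_orthogonal_rowspace ker_span _; rewrite mulmxBl muB subrr.
exists (map_mx ratr D).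
have yA j : (map_mx ratr D *m realmx R A) 0 j = (c 0 j)%:~R - ratr (mu 0 j).
  by rewrite -(ratr_ratmx R) -map_mxM -D_def !mxE rmorphB /= ratr_int.
split=> j; rewrite yA; have [mu_ge0 mu_tau] := mu_props j.
  by rewrite lerBlDr lerDl ler0q.
by move=> /mu_tau ->; rewrite rmorph0 subr0.
Qed.

Unset Implicit Arguments.
Set Strict Implicit.

Theorem theorem2p7 (R : realType) (d n : nat) (A : 'M[int]_(d, n))
    (c : 'rV[int]_n) (B : 'M[int]_(n, n - d)) (b : 'cV[int]_d)
    (u : 'cV[int]_n) (tau : {set 'I_n}) :
  full_row_rank R A ->
  cone_pointed R A ->
  ker_nonneg_trivial R A ->
  lattice_spanning A ->
  generic_cost R A c ->
  kernel_lattice_basis A B ->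
  in_NA A b ->
  (forall j, 0 <= u j 0) -> A *m u = b ->
  (grp_has_finite_opt c B u tau <-> face_Delta R A c tau).
Proof.
move=> _ _ _ _ generic ker_basis _ u_ge0 _; split.
  move=> /(finite_opt_dual_tight R ker_basis) [y y_tight].
  exact: dual_tight_face_Delta generic y_tight.
move=> /face_Delta_dual_tight [y y_tight].
case: ker_basis => AB0 _ _.
exact: dual_tight_finite_opt AB0 u_ge0 y_tight.
Qed.
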